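(* Let $k:\mathcal{Z}\times\mathcal{Z}\to\mathbb{R}$ be a positive definite kernel with polynomial eigendecay on a $d$-dimensional hypercube $\mathcal{Z}$ of side length $\rho_{\mathcal{Z}}$, and let $\lambda>0$ and $T\in\mathbb{N}$. Let $$\bm{b}_k=\left\{b(z)=\left(k(z,z)-k_Z(z)^\top(K_Z+\lambda^2I)^{-1}k_Z(z)\right)^{1/2}:\ Z\subset\mathcal{Z},\ |Z|\le T\right\}$$ be the class of kernel ridge uncertainty functions. Then its $\epsilon$-covering number $\mathcal{N}_{k,\bm b}(\epsilon)$ in the sup-norm satisfies $$\log\mathcal{N}_{k,\bm b}(\epsilon)=\mathcal{O}\!\left(\left(\frac{\rho_{\mathcal{Z}}^\alpha}{\epsilon^2}\right)^{\frac2{\tilde p-1}}\left(1+\log\frac1\epsilon\right)\right).$$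
   Context: $k$ is continuous with $k(z,z)\le1$. $k_Z(z)=[k(z,z')]_{z'\in Z}$ and $K_Z=[k(z',z'')]_{z',z''\in Z}$. Let $\{(\sigma_m,\phi_m)\}$ be the Mercer eigenpairs of $k$ on $\mathcal{Z}$ (Lebesgue measure), eigenvalues decreasing. Polynomial eigendecay means: there are $C_p,\alpha>0$, $p>1$ with $\sigma_m\le C_pm^{-p}\rho_{\mathcal{Z}}^\alpha$ for all $m$, and there is $\eta\ge0$ with $m^{-p\eta}\phi_m(z)$ uniformly bounded over $m,z$; $\tilde p=p(1-2\eta)$. The $\epsilon$-covering number is the size of a smallest subset such that every element of the class is within sup-distance $\epsilon$ of some element of the subset. *)

From HB Require Import structures.
From mathcomp Require Import all_boot all_order all_algebra.
From mathcomp Require Import all_classical all_reals all_analysis.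
Set Implicit Arguments. Unset Strict Implicit. Unset Printing Implicit Defensive.
Import Order.TTheory GRing.Theory Num.Theory.
Import numFieldNormedType.Exports.
Local Open Scope classical_set_scope.
Local Open Scope ring_scope.

Section Defs.
Variable R : realType.

Definition hcube (d : nat) (c : nat -> R) (rho : R) : set 'rV[R]_d :=
  [set z | forall i : 'I_d, c i <= z ord0 i <= c i + rho].

Fixpoint iter_int (c : nat -> R) (rho : R) (n : nat) (F : (nat -> R) -> R) : R :=
  match n with
  | 0 => F (fun _ => 0)
  | n'.+1 => iter_int c rho n' (fun x =>
      \int[@lebesgue_measure R]_(t in `[c n', c n' + rho]) F (fun i => if i == n' then t else x i))
  end.

(* Lebesgue integral over the hypercube of a (continuous) function on R^d. *)
Definition cube_int (d : nat) (c : nat -> R) (rho : R) (f : 'rV[R]_d -> R) : R :=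
  iter_int c rho d (fun x => f (\row_(i < d) x i)).

Definition pd_kernel (d : nat) (D : set 'rV[R]_d) (k : 'rV[R]_d -> 'rV[R]_d -> R) : Prop :=
  (forall z z', D z -> D z' -> k z z' = k z' z) /\
  (forall (n : nat) (Z : 'I_n -> 'rV[R]_d) (a : 'I_n -> R), (forall i, D (Z i)) ->
     0 <= \sum_(i < n) \sum_(j < n) a i * a j * k (Z i) (Z j)).

(* Mercer eigenpairs (sigma_m, phi_m)_{m>=1} (index m here stands for m+1) of k
   on the hypercube w.r.t. Lebesgue measure: orthonormal continuous eigenfunctions
   of the integral operator, nonnegative nonincreasing eigenvalues, and the
   Mercer expansion of k. *)
Definition mercer_eigenpairs (d : nat) (c : nat -> R) (rho : R)
    (k : 'rV[R]_d -> 'rV[R]_d -> R) (sigma : nat -> R) (phi : nat -> 'rV[R]_d -> R) : Prop :=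
  let D := @hcube d c rho in
  (forall m, 0 <= sigma m) /\ (forall m, sigma m.+1 <= sigma m) /\
  (forall m, {within D, continuous (phi m)}) /\
  (forall m n, cube_int c rho (fun z => phi m z * phi n z) = (m == n)%:R) /\
  (forall m z, D z -> cube_int c rho (fun z' => k z z' * phi m z') = sigma m * phi m z) /\
  (forall z z', D z -> D z' ->
     (fun N => \sum_(m < N) sigma m * phi m z * phi m z') @ \oo --> k z z').

Definition poly_eigendecay (d : nat) (c : nat -> R) (rho : R)
    (sigma : nat -> R) (phi : nat -> 'rV[R]_d -> R) (Cp alpha p eta : R) : Prop :=
  0 < Cp /\ 0 < alpha /\ 1 < p /\ 0 <= eta /\
  (forall m : nat, sigma m <= Cp * (m.+1%:R `^ (- p)) * rho `^ alpha) /\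
  (exists B : R, forall (m : nat) z, @hcube d c rho z ->
     `| m.+1%:R `^ (- (p * eta)) * phi m z | <= B).

Definition kr_uncertainty (d n : nat) (k : 'rV[R]_d -> 'rV[R]_d -> R) (lambda : R)
    (Z : 'I_n -> 'rV[R]_d) (z : 'rV[R]_d) : R :=
  let kZ : 'cV[R]_n := \col_(i < n) k (Z i) z in
  let KZ : 'M[R]_n := \matrix_(i < n, j < n) k (Z i) (Z j) in
  Num.sqrt (k z z - ((kZ^T *m invmx (KZ + (lambda ^+ 2)%:M) *m kZ) ord0 ord0)).

Definition kr_uncertainty_class (d : nat) (D : set 'rV[R]_d)
    (k : 'rV[R]_d -> 'rV[R]_d -> R) (lambda : R) (T : nat) : set ('rV[R]_d -> R) :=
  [set b | exists (n : nat) (Z : 'I_n -> 'rV[R]_d),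
     [/\ (n <= T)%N, injective Z, (forall i, D (Z i)) & b = kr_uncertainty k lambda Z]].

Definition has_cover (d : nat) (D : set 'rV[R]_d) (F : set ('rV[R]_d -> R))
    (eps : R) (n : nat) : Prop :=
  exists s : seq ('rV[R]_d -> R),
    [/\ size s = n, (forall g, g \in s -> F g) &
        forall f, F f -> exists2 g, g \in s & forall z, D z -> `| f z - g z | <= eps].

Definition is_covering_number (d : nat) (D : set 'rV[R]_d) (F : set ('rV[R]_d -> R))
    (eps : R) (N : nat) : Prop :=
  has_cover D F eps N /\ forall n, has_cover D F eps n -> (N <= n)%N.

End Defs.
Arguments hcube {R} d c rho.

(* Truncate the Mercer expansion after M terms: k(z, z') = psi(z)^T psi(z') + r_M(z, z'),
   where psi(z) = (sqrt(sigma_m) phi_m(z))_{m < M} and the remainder r_M is positive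
   semidefinite, being a limit of partial sums of the kernels sigma_m phi_m(z) phi_m(z').
   This makes every uncertainty function b_Z sqrt(r_M(z, z))-close to
   z |-> sqrt(psi(z)^T A_Z psi(z)), where A_Z = I - Psi_Z^T (K_Z + lambda^2 I)^-1 Psi_Z
   satisfies 0 <= A_Z <= I.  Rounding the entries of A_Z to a grid of mesh eps^2/(16 M)
   thus yields an eps-cover of size (O(M/eps^2))^(M^2).  Under polynomial eigendecay,
   sigma_m phi_m(z)^2 = O(rho^alpha m^-p~), so r_M = O(rho^alpha M^(1 - p~)) and
   M ~ (rho^alpha/eps^2)^(1/(p~ - 1)) suffices, giving a log covering number of order
   M^2 log(M/eps). *)

From HB Require Import structures.
From mathcomp Require Import all_boot all_order all_algebra.
From mathcomp Require Import all_classical all_reals all_analysis.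
From mathcomp Require Import ring lra.
Set Implicit Arguments. Unset Strict Implicit. Unset Printing Implicit Defensive.
Import Order.TTheory GRing.Theory Num.Theory.
Import numFieldNormedType.Exports.
Local Open Scope classical_set_scope.
Local Open Scope ring_scope.

Section SqrtBounds.
Variable R : realType.
Implicit Types a b c : R.

Definition nonneg_binary_form a b c :=
  forall s t : R, 0 <= s ^+ 2 * a + 2 * s * t * b + t ^+ 2 * c.

Lemma nonneg_binary_formP a b c : nonneg_binary_form a b c ->
  [/\ 0 <= a, 0 <= c & b ^+ 2 <= a * c].
Proof.
move=> H.
have a_ge0 : 0 <= a by have := H 1 0; lra.
have c_ge0 : 0 <= c by have := H 0 1; lra.
split => //.
have := H b (- a); have := H c (- b); have := H 1 (- b).
have [->|a_neq0] := eqVneq a 0; last first.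
  have a_gt0 : 0 < a by rewrite lt_def a_neq0.
  nra.
have [->|c_neq0] := eqVneq c 0; first nra.
have c_gt0 : 0 < c by rewrite lt_def c_neq0.
nra.
Qed.

Lemma dist_sqrt_binary_form_le a b c : nonneg_binary_form a b c ->
  `|Num.sqrt (a + 2 * b + c) - Num.sqrt a| <= Num.sqrt c.
Proof.
move=> H; have [a_ge0 c_ge0 b2_le] := nonneg_binary_formP H.
have s_ge0 : 0 <= a + 2 * b + c by have := H 1 1; lra.
have := sqrtr_ge0 a; have := sqrtr_ge0 c; have := sqrtr_ge0 (a + 2 * b + c).
have := sqr_sqrtr a_ge0; have := sqr_sqrtr c_ge0; have := sqr_sqrtr s_ge0.
set sa := Num.sqrt a; set sc := Num.sqrt c; set ss := Num.sqrt _.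
move=> ess esc esa ss_ge0 sc_ge0 sa_ge0.
have b_le : b <= sa * sc.
  have : b ^+ 2 <= (sa * sc) ^+ 2 by rewrite exprMn esa esc.
  have := mulr_ge0 sa_ge0 sc_ge0; nra.
have bc_ge : - (b + c) <= sc * ss.
  have : (b + c) ^+ 2 <= (sc * ss) ^+ 2 by rewrite exprMn esc ess; nra.
  have := mulr_ge0 sc_ge0 ss_ge0; nra.
rewrite ler_norml; apply/andP; split.
- suff : sa <= ss + sc by lra.
  rewrite -ler_sqr ?nnegrE ?addr_ge0 // esa sqrrD ess esc; nra.
- suff : ss <= sa + sc by lra.
  rewrite -ler_sqr ?nnegrE ?addr_ge0 // ess sqrrD esa esc; nra.
Qed.

Lemma dist_sqrt_le a b : 0 <= a -> 0 <= b ->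
  `|Num.sqrt a - Num.sqrt b| <= Num.sqrt `|a - b|.
Proof.
wlog ba : a b / b <= a.
  move=> W a_ge0 b_ge0; have [ba|ab] := leP b a; first exact: W.
  by rewrite distrC (distrC a); apply: W => //; lra.
move=> a_ge0 b_ge0; rewrite [`|a - b|]ger0_norm ?subr_ge0 //.
have sba : Num.sqrt b <= Num.sqrt a by rewrite ler_sqrt.
rewrite ger0_norm ?subr_ge0 // lerBlDl.
rewrite -ler_sqr ?nnegrE ?addr_ge0 ?sqrtr_ge0 //.
rewrite sqrrD !sqr_sqrtr ?subr_ge0 //.
have := mulr_ge0 (sqrtr_ge0 b) (sqrtr_ge0 (a - b)); lra.
Qed.

Lemma sqrt_sqr_div16 a : 0 <= a -> Num.sqrt (a ^+ 2 / 16) = a / 4.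
Proof.
have -> : a ^+ 2 / 16 = (a / 4) ^+ 2 by field.
by move=> a_ge0; rewrite sqrtr_sqr ger0_norm // divr_ge0.
Qed.

End SqrtBounds.

Section QuadraticForms.
Variable R : realType.

Definition vdot n (u v : 'cV[R]_n) : R := (u^T *m v) ord0 ord0.
Definition qform n (u : 'cV[R]_n) (A : 'M[R]_n) (v : 'cV[R]_n) : R :=
  (u^T *m A *m v) ord0 ord0.

Variable n : nat.
Implicit Types (u v w : 'cV[R]_n) (A B : 'M[R]_n) (a s t : R).

Lemma vdotE u v : vdot u v = \sum_i u i ord0 * v i ord0.
Proof. by rewrite /vdot mxE; apply: eq_bigr => i _; rewrite mxE. Qed.

Lemma qformE u A v :
  qform u A v = \sum_i \sum_j u i ord0 * A i j * v j ord0.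
Proof.
rewrite /qform mxE; under eq_bigr => j _ do rewrite mxE big_distrl /=.
rewrite exchange_big; apply: eq_bigr => i _; apply: eq_bigr => j _.
by rewrite !mxE.
Qed.

Lemma vdotC u v : vdot u v = vdot v u.
Proof. by rewrite !vdotE; apply: eq_bigr => i _; rewrite mulrC. Qed.

Lemma vdot_ge0 u : 0 <= vdot u u.
Proof. by rewrite vdotE; apply: sumr_ge0 => i _; rewrite -expr2 sqr_ge0. Qed.

Lemma vdot_eq0 u : vdot u u = 0 -> u = 0.
Proof.
rewrite vdotE => /eqP; rewrite psumr_eq0; last by move=> i _; rewrite -expr2 sqr_ge0.
move=> /allP u0; apply/matrixP => i j; rewrite (ord1 j) mxE.
by have := u0 i (mem_index_enum _); rewrite -expr2 sqrf_eq0 => /eqP.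
Qed.

Lemma vdotDl u v w : vdot (u + v) w = vdot u w + vdot v w.
Proof. by rewrite /vdot linearD /= mulmxDl mxE. Qed.
Lemma vdotZl a u w : vdot (a *: u) w = a * vdot u w.
Proof. by rewrite /vdot linearZ /= -scalemxAl mxE. Qed.
Lemma vdotDr u v w : vdot w (u + v) = vdot w u + vdot w v.
Proof. by rewrite /vdot mulmxDr mxE. Qed.
Lemma vdotZr a u w : vdot w (a *: u) = a * vdot w u.
Proof. by rewrite /vdot -scalemxAr mxE. Qed.

Lemma qformDl u v w A : qform (u + v) A w = qform u A w + qform v A w.
Proof. by rewrite /qform linearD /= !mulmxDl mxE. Qed.
Lemma qformZl a u w A : qform (a *: u) A w = a * qform u A w.
Proof. by rewrite /qform linearZ /= -!scalemxAl mxE. Qed.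
Lemma qformDr u v w A : qform w A (u + v) = qform w A u + qform w A v.
Proof. by rewrite /qform mulmxDr mxE. Qed.
Lemma qformZr a u w A : qform w A (a *: u) = a * qform w A u.
Proof. by rewrite /qform -scalemxAr mxE. Qed.

Lemma qformDm u v A B : qform u (A + B) v = qform u A v + qform u B v.
Proof. by rewrite /qform mulmxDr mulmxDl mxE. Qed.
Lemma qformBm u v A B : qform u (A - B) v = qform u A v - qform u B v.
Proof. by rewrite /qform mulmxBr mulmxBl !mxE. Qed.
Lemma qform_scalar u v a : qform u a%:M v = a * vdot u v.
Proof. by rewrite /qform mul_mx_scalar -scalemxAl mxE. Qed.

Lemma qform_comb u v A s t :
  qform (s *: u + t *: v) A (s *: u + t *: v) =
  s ^+ 2 * qform u A u + s * t * (qform u A v + qform v A u) + t ^+ 2 * qform v A v.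
Proof. rewrite !(qformDl, qformDr, qformZl, qformZr); ring. Qed.

Lemma vdot_mulmx_qform A v : vdot (A *m v) v = qform v A v.
Proof.
have tr11 (B : 'M[R]_1) : B ord0 ord0 = B^T ord0 ord0 by rewrite mxE.
by rewrite /vdot /qform tr11 trmx_mul trmxK mulmxA.
Qed.

Lemma qform_mul_tr m (P : 'M[R]_(n, m)) u v :
  qform u (P *m P^T) v = vdot (P^T *m u) (P^T *m v).
Proof. by rewrite /qform /vdot trmx_mul trmxK !mulmxA. Qed.

Lemma vdot_mulmxl m (P : 'M[R]_(n, m)) (x : 'cV[R]_m) v :
  vdot (P *m x) v = vdot x (P^T *m v).
Proof. by rewrite /vdot trmx_mul !mulmxA. Qed.

End QuadraticForms.

Section RegularizedInverse.
Variables (R : realType) (n M : nat) (K : 'M[R]_n) (Psi : 'M[R]_(n, M)) (lam : R).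
Hypothesis lam_gt0 : 0 < lam.

(* The block matrix [K r; r^T r0] dominates [Psi Psi^T 0; 0 0]. *)
Definition aug_psd (r : 'cV[R]_n) (r0 : R) := forall (a : 'cV[R]_n) t,
  0 <= qform a (K - Psi *m Psi^T) a + 2 * t * vdot a r + t ^+ 2 * r0.

Lemma aug_psd0 : (forall a, 0 <= qform a (K - Psi *m Psi^T) a) -> aug_psd 0 0.
Proof.
by move=> psdK a t; rewrite /vdot mulmx0 mxE !(mulr0, addr0).
Qed.

Variables (r : 'cV[R]_n) (r0 : R).
Hypothesis psd : aug_psd r r0.

Lemma regularized_gram_unitmx : K + (lam ^+ 2)%:M \in unitmx.
Proof.
rewrite unitmxE unitfE; apply/negP => /det0P [v v_neq0 v0].
have qv0 : qform v^T (K + (lam ^+ 2)%:M) v^T = 0 by rewrite /qform trmxK v0 mul0mx mxE.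
have qvK : qform v^T K v^T
    = qform v^T (K - Psi *m Psi^T) v^T + vdot (Psi^T *m v^T) (Psi^T *m v^T).
  by rewrite qformBm qform_mul_tr; ring.
move: qv0; rewrite qformDm qform_scalar qvK.
have := psd v^T 0; have := vdot_ge0 (Psi^T *m v^T); have := vdot_ge0 v^T.
have : 0 < lam ^+ 2 by rewrite exprn_gt0.
move=> *; have /vdot_eq0/(congr1 trmx) : vdot v^T v^T = 0 by nra.
by rewrite trmxK trmx0 => v0'; rewrite v0' eqxx in v_neq0.
Qed.

(* With c := (K + lam^2)^-1 y, the form equals y^T c = c^T (K + lam^2) c; expanding it
   and completing squares with [psd] at (-c, t) and |s x - Psi^T c|^2 >= 0 gives the bound. *)
Lemma qform_regularized_inv_le (x : 'cV[R]_M) s t :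
  0 <= qform (s *: (Psi *m x) + t *: r) (invmx (K + (lam ^+ 2)%:M))
              (s *: (Psi *m x) + t *: r)
    <= s ^+ 2 * vdot x x + t ^+ 2 * r0.
Proof.
set y := _ + _; set Kl := K + _; set c := invmx Kl *m y.
have Klc : Kl *m c = y by rewrite /c mulmxA mulmxV ?mul1mx //; exact: regularized_gram_unitmx.
have -> : qform y (invmx Kl) y = vdot y c by rewrite /qform /vdot /c mulmxA.
set w := Psi^T *m c.
have ycE : vdot y c = qform c (K - Psi *m Psi^T) c + vdot w w + lam ^+ 2 * vdot c c.
  by rewrite -{1}Klc vdot_mulmx_qform /Kl qformDm qform_scalar qformBm qform_mul_tr; ring.
have ycE' : vdot y c = s * vdot x w + t * vdot c r.
  by rewrite /y vdotDl !vdotZl vdot_mulmxl (vdotC r).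
have psd_c := psd ((-1) *: c) t; rewrite qformZl qformZr vdotZl in psd_c.
have sq := vdot_ge0 (s *: x + (-1) *: w).
rewrite !(vdotDl, vdotDr, vdotZl, vdotZr) (vdotC w x) in sq.
have := psd c 0; have := vdot_ge0 c; have := vdot_ge0 w.
have : 0 <= lam ^+ 2 * vdot c c by rewrite mulr_ge0 ?sqr_ge0 ?vdot_ge0.
by move=> *; apply/andP; split; lra.
Qed.

End RegularizedInverse.

Section FeaturePosterior.
Variables (R : realType) (n M : nat) (K : 'M[R]_n) (Psi : 'M[R]_(n, M)) (lam : R).
Hypothesis lam_gt0 : 0 < lam.

Definition feature_posterior_mx : 'M[R]_M :=
  1%:M - Psi^T *m invmx (K + (lam ^+ 2)%:M) *m Psi.

Lemma qform_feature_posterior (u : 'cV[R]_M) : qform u feature_posterior_mx u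
  = vdot u u - qform (Psi *m u) (invmx (K + (lam ^+ 2)%:M)) (Psi *m u).
Proof.
rewrite qformBm qform_scalar mul1r; congr (_ - _).
by rewrite /qform trmx_mul !mulmxA.
Qed.

Lemma feature_posterior_bounds : (forall a, 0 <= qform a (K - Psi *m Psi^T) a) ->
  forall u, 0 <= qform u feature_posterior_mx u <= vdot u u.
Proof.
move=> /aug_psd0 psd u.
have := qform_regularized_inv_le lam_gt0 psd u 1 0.
rewrite scale1r scale0r addr0 qform_feature_posterior; lra.
Qed.

(* The first square root is the kernel ridge uncertainty at a point z with kernel
   column Psi x + r and k(z, z) = |x|^2 + r0. *)
Lemma dist_sqrt_feature_posterior_le (r : 'cV[R]_n) (r0 : R) (x : 'cV[R]_M) :
  aug_psd K Psi r r0 ->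
  `|Num.sqrt (vdot x x + r0
               - qform (Psi *m x + r) (invmx (K + (lam ^+ 2)%:M)) (Psi *m x + r))
    - Num.sqrt (qform x feature_posterior_mx x)| <= Num.sqrt r0.
Proof.
move=> psd; set C := invmx _.
set a := vdot x x - qform (Psi *m x) C (Psi *m x).
set g := r0 - qform r C r.
set b := - (qform (Psi *m x) C r + qform r C (Psi *m x)) / 2.
have abg : nonneg_binary_form a b g.
  move=> s t; have /andP[_] := qform_regularized_inv_le lam_gt0 psd x s t.
  rewrite qform_comb /a /b /g; lra.
have -> : vdot x x + r0 - qform (Psi *m x + r) C (Psi *m x + r) = a + 2 * b + g.
  have := qform_comb (Psi *m x) r C 1 1; rewrite !scale1r => ->.
  by rewrite /a /b /g; field.
rewrite qform_feature_posterior -/C -/a.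
apply: le_trans (dist_sqrt_binary_form_le abg) _; apply: ler_wsqrtr.
have /andP[+ _] := qform_regularized_inv_le lam_gt0 psd x 0 1.
rewrite scale0r add0r scale1r /g; lra.
Qed.

End FeaturePosterior.

Section PowerTails.
Variable R : realType.

(* Via 1 + x <= e^x twice: (m/(m+1))^(1-q) >= 1 + (q-1) ln(1 + 1/m) >= 1 + (q-1)/(m+1). *)
Lemma powR_diff_ge (q : R) (m : nat) : 1 < q -> (0 < m)%N ->
  (q - 1) * m.+1%:R `^ (- q) <= m%:R `^ (1 - q) - m.+1%:R `^ (1 - q).
Proof.
move=> q_gt1 m_gt0.
have m_pos : (m%:R : R) \is Num.pos by rewrite posrE ltr0n.
have m1_pos : (m.+1%:R : R) \is Num.pos by rewrite posrE ltr0n.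
rewrite /powR !gt_eqF -?posrE //.
set u := ln m%:R; set v := ln m.+1%:R.
have vu : 1 / m.+1%:R <= v - u.
  have : 1 + (u - v) <= m%:R / m.+1%:R by rewrite -[m%:R]lnK // -[m.+1%:R]lnK // -expRB expR_ge1Dx.
  have -> : m%:R / m.+1%:R = 1 - 1 / m.+1%:R :> R by rewrite -natr1; field; rewrite natr1 pnatr_eq0.
  by set w := 1 / _; lra.
set E := expR ((1 - q) * v).
have E_gt0 : 0 < E by apply: expR_gt0.
have ev : expR v = m.+1%:R by rewrite lnK.
have -> : expR (- q * v) = E / m.+1%:R by rewrite /E -ev -expRB; congr expR; ring.
have -> : expR ((1 - q) * u) = E * expR ((q - 1) * (v - u)) by rewrite /E -expRD; congr expR; ring.
have := ler_wpM2l (ltW E_gt0) (expR_ge1Dx ((q - 1) * (v - u))).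
have : E * (q - 1) / m.+1%:R <= E * (q - 1) * (v - u).
  by rewrite ler_pM2l ?mulr_gt0 ?subr_gt0 // -div1r.
by set i := _^-1; set e := expR _; lra.
Qed.

Lemma sum_powR_tail_le (q : R) (M N : nat) : 1 < q -> (0 < M)%N ->
  \sum_(M <= m < N) m.+1%:R `^ (- q) <= M%:R `^ (1 - q) / (q - 1).
Proof.
move=> q_gt1 M_gt0; have q1_gt0 : 0 < q - 1 by lra.
have [NM|MN] := leqP N M; first by rewrite big_geq // divr_ge0 ?powR_ge0 ?ltW.
suff : \sum_(M <= m < N) m.+1%:R `^ (- q) <= (M%:R `^ (1 - q) - N%:R `^ (1 - q)) / (q - 1).
  by move/le_trans; apply; rewrite ler_pM2r ?invr_gt0 // gerBl powR_ge0.
elim: N MN => // N IH; rewrite ltnS leq_eqVlt => /orP[/eqP <-|MN].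
  rewrite big_nat1 ler_pdivlMr // mulrC; exact: powR_diff_ge.
rewrite big_nat_recr 1?ltnW //=.
apply: le_trans (lerD (IH MN) (lexx _)) _.
have -> : (M%:R `^ (1 - q) - N.+1%:R `^ (1 - q)) / (q - 1) =
    (M%:R `^ (1 - q) - N%:R `^ (1 - q)) / (q - 1)
    + (N%:R `^ (1 - q) - N.+1%:R `^ (1 - q)) / (q - 1).
  by field; rewrite gt_eqF.
rewrite lerD2l ler_pdivlMr // mulrC.
exact: powR_diff_ge (leq_trans M_gt0 (ltnW MN)).
Qed.

Lemma mul_sqr_le_powR (x a b s f B c : R) : 0 < x -> 0 <= s -> 0 <= c ->
  s <= c * x `^ (- b) -> `|x `^ (- a) * f| <= B ->
  s * f ^+ 2 <= c * B ^+ 2 * x `^ (- (b - 2 * a)).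
Proof.
move=> x_gt0 s_ge0 c_ge0 s_le f_le.
have xa_gt0 : 0 < x `^ a by apply: powR_gt0.
have f2_le : f ^+ 2 <= (x `^ a) ^+ 2 * B ^+ 2.
  have -> : f = x `^ a * (x `^ (- a) * f) by rewrite mulrA powRN mulfV ?gt_eqF ?mul1r.
  rewrite exprMn ler_pM2l ?exprn_gt0 // -real_normK ?num_real //.
  by rewrite ler_sqr ?nnegrE // (le_trans _ f_le).
have -> : x `^ (- (b - 2 * a)) = x `^ (- b) * (x `^ a) ^+ 2.
  rewrite -powR_mulrn ?powR_ge0 // -powRrM -powRD ?(gt_eqF x_gt0) ?implybT //.
  by congr (_ `^ _); ring.
apply: (le_trans (ler_wpM2r (sqr_ge0 f) s_le)).
rewrite [X in _ <= X](_ : _ = c * x `^ (- b) * ((x `^ a) ^+ 2 * B ^+ 2)); last by ring.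
by apply: ler_wpM2l; rewrite ?mulr_ge0 ?powR_ge0.
Qed.

End PowerTails.

Lemma cvg_sum_ord (R : realType) n (u : 'I_n -> nat -> R) (l : 'I_n -> R) :
  (forall i, u i N @[N --> \oo] --> l i) -> \sum_i u i N @[N --> \oo] --> \sum_i l i.
Proof.
elim: n u l => [|n IH] u l ul.
  by rewrite big_ord0; under eq_cvg do rewrite big_ord0; exact: cvg_cst.
rewrite big_ord_recr /=; under eq_cvg do rewrite big_ord_recr /=.
by apply: cvgD; [apply: IH => i; exact: ul|exact: ul].
Qed.

Section MercerTruncation.
Variables (R : realType) (d : nat) (D : set 'rV[R]_d) (k : 'rV[R]_d -> 'rV[R]_d -> R)
  (sigma : nat -> R) (phi : nat -> 'rV[R]_d -> R).
Hypothesis sigma_ge0 : forall m, 0 <= sigma m.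
Hypothesis mercer_cvg : forall z z', D z -> D z' ->
  (fun N => \sum_(m < N) sigma m * phi m z * phi m z') @ \oo --> k z z'.

Definition mercer_sum N z z' := \sum_(m < N) sigma m * phi m z * phi m z'.
Definition mercer_remainder M z z' := k z z' - mercer_sum M z z'.

Definition feature_vec M z : 'cV[R]_M := \col_(m < M) (Num.sqrt (sigma m) * phi m z).
Definition feature_mx n M (Z : 'I_n -> 'rV[R]_d) : 'M[R]_(n, M) :=
  \matrix_(i < n, m < M) (Num.sqrt (sigma m) * phi m (Z i)).
Definition gram_mx n (Z : 'I_n -> 'rV[R]_d) : 'M[R]_n := \matrix_(i, j) k (Z i) (Z j).
Definition remainder_col n M (Z : 'I_n -> 'rV[R]_d) z : 'cV[R]_n :=
  \col_i mercer_remainder M (Z i) z.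

Lemma sqrt_sigma_mulC m a b :
  Num.sqrt (sigma m) * a * (Num.sqrt (sigma m) * b) = sigma m * a * b.
Proof. by rewrite mulrACA -expr2 sqr_sqrtr // mulrA. Qed.

Lemma kernel_col_feature n M (Z : 'I_n -> 'rV[R]_d) z :
  \col_i k (Z i) z = feature_mx M Z *m feature_vec M z + remainder_col M Z z.
Proof.
apply/matrixP => i j; rewrite !mxE /mercer_remainder /mercer_sum.
under [in RHS]eq_bigr => m _ do rewrite !mxE sqrt_sigma_mulC.
by rewrite addrC subrK.
Qed.

Lemma kernel_diag_feature M z :
  k z z = vdot (feature_vec M z) (feature_vec M z) + mercer_remainder M z z.
Proof.
have -> : vdot (feature_vec M z) (feature_vec M z) = mercer_sum M z z.
  by rewrite vdotE; apply: eq_bigr => m _; rewrite !mxE sqrt_sigma_mulC.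
by rewrite /mercer_remainder addrC subrK.
Qed.

Lemma gram_sub_feature n M (Z : 'I_n -> 'rV[R]_d) :
  gram_mx Z - feature_mx M Z *m (feature_mx M Z)^T
  = \matrix_(i, j) mercer_remainder M (Z i) (Z j).
Proof.
apply/matrixP => i j; rewrite !mxE /mercer_remainder /mercer_sum; congr (_ - _).
by apply: eq_bigr => m _; rewrite !mxE sqrt_sigma_mulC.
Qed.

(* Quadratic form of F at the points Z_0, ..., Z_(n-1), z with coefficients v, t;
   the cross terms are taken on one side only, so F need not be symmetric. *)
Definition aug_form n (Z : 'I_n -> 'rV[R]_d) z (v : 'cV[R]_n) t F :=
  \sum_i \sum_j v i ord0 * F (Z i) (Z j) * v j ord0
  + 2 * t * \sum_i v i ord0 * F (Z i) z + t ^+ 2 * F z z.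

Lemma aug_form_mercer_sum n (Z : 'I_n -> 'rV[R]_d) z v t N :
  aug_form Z z v t (mercer_sum N)
  = \sum_(m < N) sigma m * (\sum_i v i ord0 * phi m (Z i) + t * phi m z) ^+ 2.
Proof.
have termE m : sigma m * (\sum_i v i ord0 * phi m (Z i) + t * phi m z) ^+ 2 =
    \sum_i \sum_j v i ord0 * (sigma m * phi m (Z i) * phi m (Z j)) * v j ord0
    + 2 * t * \sum_i v i ord0 * (sigma m * phi m (Z i) * phi m z)
    + t ^+ 2 * (sigma m * phi m z * phi m z).
  rewrite sqrrD expr2 big_distrlr /= mulrDr mulrDr mulr_sumr; congr (_ + _ + _).
  - by apply: eq_bigr => i _; rewrite mulr_sumr; apply: eq_bigr => j _; ring.
  - by rewrite -mulr_natr !mulr_suml !mulr_sumr; apply: eq_bigr => i _; ring.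
  - by ring.
under eq_bigr => m _ do rewrite termE.
rewrite !big_split /= /aug_form /mercer_sum.
congr (_ + _ + _).
- rewrite [RHS]exchange_big; apply: eq_bigr => i _; rewrite [RHS]exchange_big.
  by apply: eq_bigr => j _; rewrite mulr_sumr mulr_suml.
- rewrite -[RHS]mulr_sumr; congr (_ * _); rewrite [RHS]exchange_big.
  by apply: eq_bigr => i _; rewrite mulr_sumr.
- by rewrite -[RHS]mulr_sumr.
Qed.

Lemma aug_formB n (Z : 'I_n -> 'rV[R]_d) z v t F1 F2 :
  aug_form Z z v t F1 - aug_form Z z v t F2 = aug_form Z z v t (fun p q => F1 p q - F2 p q).
Proof.
have quadB : \sum_i \sum_j v i ord0 * F1 (Z i) (Z j) * v j ord0
    - \sum_i \sum_j v i ord0 * F2 (Z i) (Z j) * v j ord0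
    = \sum_i \sum_j v i ord0 * (F1 (Z i) (Z j) - F2 (Z i) (Z j)) * v j ord0.
  rewrite -sumrB; apply: eq_bigr => i _; rewrite -sumrB; apply: eq_bigr => j _; ring.
have linB : \sum_i v i ord0 * F1 (Z i) z - \sum_i v i ord0 * F2 (Z i) z
    = \sum_i v i ord0 * (F1 (Z i) z - F2 (Z i) z).
  by rewrite -sumrB; apply: eq_bigr => i _; ring.
rewrite /aug_form -quadB -linB; ring.
Qed.

Lemma aug_form_remainder n M (Z : 'I_n -> 'rV[R]_d) z v t :
  aug_form Z z v t (mercer_remainder M)
  = qform v (gram_mx Z - feature_mx M Z *m (feature_mx M Z)^T) v
    + 2 * t * vdot v (remainder_col M Z z) + t ^+ 2 * mercer_remainder M z z.
Proof.
rewrite gram_sub_feature qformE vdotE /aug_form; congr (_ + _ * _ + _).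
- by apply: eq_bigr => i _; apply: eq_bigr => j _; rewrite mxE.
- by apply: eq_bigr => i _; rewrite mxE.
Qed.

Lemma aug_form_cvg n (Z : 'I_n -> 'rV[R]_d) z v t :
  (forall i, D (Z i)) -> D z ->
  aug_form Z z v t (mercer_sum N) @[N --> \oo] --> aug_form Z z v t k.
Proof.
move=> DZ Dz; apply: cvgD; first apply: cvgD.
- apply: cvg_sum_ord => i; apply: cvg_sum_ord => j.
  by apply: cvgMr_tmp; apply: cvgMl_tmp; exact: mercer_cvg.
- by apply: cvgMl_tmp; apply: cvg_sum_ord => i; apply: cvgMl_tmp; exact: mercer_cvg.
- by apply: cvgMl_tmp; exact: mercer_cvg.
Qed.

Lemma remainder_aug_psd n M (Z : 'I_n -> 'rV[R]_d) z :
  (forall i, D (Z i)) -> D z ->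
  aug_psd (gram_mx Z) (feature_mx M Z) (remainder_col M Z z) (mercer_remainder M z z).
Proof.
move=> DZ Dz v t; rewrite -aug_form_remainder -aug_formB subr_ge0.
have cvg_form := aug_form_cvg (v := v) (t := t) DZ Dz.
rewrite -(cvg_lim _ cvg_form) //; apply: limr_ge; first by apply/cvg_ex; eexists; exact: cvg_form.
exists M => // N /= MN; rewrite !aug_form_mercer_sum.
set f := fun m : nat => sigma m * (\sum_i v i ord0 * phi m (Z i) + t * phi m z) ^+ 2.
rewrite -!(big_mkord xpredT f).
by apply: nondecreasing_series => // m _ _; rewrite /f mulr_ge0 ?sqr_ge0.
Qed.

Lemma mercer_remainder_diag_ge0 M z : D z -> 0 <= mercer_remainder M z z.
Proof.
move=> Dz; have DZ : forall i : 'I_0, D ((fun=> z) i) by case.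
have := remainder_aug_psd M DZ Dz 0 1.
by rewrite qformE vdotE !big_ord0 mulr0 !add0r expr1n mul1r.
Qed.

Lemma vdot_feature_vec_le M z : D z ->
  vdot (feature_vec M z) (feature_vec M z) <= k z z.
Proof. by move=> Dz; rewrite (kernel_diag_feature M z) lerDl mercer_remainder_diag_ge0. Qed.

Lemma mercer_remainder_diag_le (q c0 : R) M z : 1 < q -> 0 <= c0 -> (0 < M)%N -> D z ->
  (forall m, sigma m * phi m z ^+ 2 <= c0 * m.+1%:R `^ (- q)) ->
  mercer_remainder M z z <= c0 * (M%:R `^ (1 - q) / (q - 1)).
Proof.
move=> q_gt1 c0_ge0 M_gt0 Dz term_le; rewrite /mercer_remainder lerBlDl.
have cvg_diag := mercer_cvg Dz Dz.
rewrite -(cvg_lim _ cvg_diag) //; apply: limr_le; first by apply/cvg_ex; eexists; exact: cvg_diag.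
exists M => // N /= MN; rewrite -lerBlDl /mercer_sum.
rewrite -!(big_mkord xpredT (fun m => sigma m * phi m z * phi m z)).
rewrite (big_cat_nat (leq0n M) MN) /= addrC addrK.
apply: le_trans (_ : \sum_(M <= m < N) c0 * m.+1%:R `^ (- q) <= _).
  by apply: ler_sum => m _; rewrite -mulrA -expr2.
by rewrite -mulr_sumr ler_wpM2l // sum_powR_tail_le.
Qed.

Lemma kr_uncertainty_feature_approx n M (Z : 'I_n -> 'rV[R]_d) z lam :
  (forall i, D (Z i)) -> D z -> 0 < lam ->
  `|kr_uncertainty k lam Z z
    - Num.sqrt (qform (feature_vec M z)
                  (feature_posterior_mx (gram_mx Z) (feature_mx M Z) lam) (feature_vec M z))|
  <= Num.sqrt (mercer_remainder M z z).
Proof.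
move=> DZ Dz lam_gt0.
have -> : kr_uncertainty k lam Z z = Num.sqrt (k z z
    - qform (\col_i k (Z i) z) (invmx (gram_mx Z + (lam ^+ 2)%:M)) (\col_i k (Z i) z)).
  by [].
rewrite (kernel_col_feature M Z z) (kernel_diag_feature M z).
exact: (dist_sqrt_feature_posterior_le lam_gt0 (feature_vec M z) (remainder_aug_psd M DZ Dz)).
Qed.

Lemma feature_posterior_gram_bounds n M (Z : 'I_n -> 'rV[R]_d) lam :
  (forall i, D (Z i)) -> D !=set0 -> 0 < lam ->
  forall u : 'cV[R]_M,
    0 <= qform u (feature_posterior_mx (gram_mx Z) (feature_mx M Z) lam) u <= vdot u u.
Proof.
move=> DZ [z Dz] lam_gt0; apply: feature_posterior_bounds => // a.
have := remainder_aug_psd M DZ Dz a 0.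
by rewrite mulr0 mul0r addr0 expr0n /= mul0r addr0.
Qed.

End MercerTruncation.

Section CoveringNumbers.
Variables (R : realType) (d : nat) (D : set 'rV[R]_d) (F : set ('rV[R]_d -> R)) (eps : R).

Lemma has_cover_of_labelling (I : finType) (L : ('rV[R]_d -> R) -> I -> Prop) :
  (forall f, F f -> exists i, L f i) ->
  (forall f g i, F f -> F g -> L f i -> L g i -> forall z, D z -> `|f z - g z| <= eps) ->
  exists2 n, (n <= #|I|)%N & has_cover D F eps n.
Proof.
move=> labelled close.
pose P i := `[< exists f, F f /\ L f i >].
pose rep i : 'rV[R]_d -> R :=
  if pselect (exists f, F f /\ L f i) is left h then proj1_sig (cid h) else fun=> 0.
have repP i : P i -> F (rep i) /\ L (rep i) i.
  by move=> /asboolP Pi; rewrite /rep; case: pselect => // h; case: (cid h).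
pose s := [seq rep i | i <- enum I & P i].
exists (size s); first by rewrite size_map size_filter cardE count_size.
exists s; split => //.
- by move=> g /mapP [i]; rewrite mem_filter => /andP [/repP[]] + _ _ ->.
- move=> f Ff; have [i Lfi] := labelled f Ff.
  have Pi : P i by apply/asboolP; exists f.
  have [Fr Lr] := repP i Pi.
  exists (rep i); first by apply: map_f; rewrite mem_filter Pi mem_enum.
  exact: close Ff Fr Lfi Lr.
Qed.

Lemma covering_number_le n : has_cover D F eps n ->
  exists N, is_covering_number D F eps N /\ (N <= n)%N.
Proof.
move=> cov_n.
have ex : exists n, `[< has_cover D F eps n >] by exists n; apply/asboolP.
case: (ex_minnP ex) => N /asboolP cov_N N_min.
exists N; split; last exact/N_min/asboolP.
by split => // m cov_m; apply/N_min/asboolP.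
Qed.

End CoveringNumbers.

Section SymmetricPart.
Variables (R : realType) (M : nat).
Implicit Types (A : 'M[R]_M) (x : 'cV[R]_M).

Definition sym_part A : 'M[R]_M := \matrix_(i, j) ((A i j + A j i) / 2).

Lemma qform_sym_part x A :
  qform x A x = \sum_i \sum_j x i ord0 * sym_part A i j * x j ord0.
Proof.
have qformT : \sum_i \sum_j x i ord0 * A j i * x j ord0 = qform x A x.
  by rewrite qformE exchange_big; apply: eq_bigr => i _; apply: eq_bigr => j _; ring.
have -> : qform x A x = (qform x A x + qform x A x) / 2 by field.
rewrite -{1}qformT qformE -big_split /= mulr_suml; apply: eq_bigr => i _.
by rewrite -big_split /= mulr_suml; apply: eq_bigr => j _; rewrite mxE; field.
Qed.

Lemma qform_delta A i j :
  qform (delta_mx i ord0) A (delta_mx j ord0) = A i j.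
Proof. by rewrite /qform trmx_delta -rowE -colE !mxE. Qed.

Lemma vdot_delta (i : 'I_M) : vdot (delta_mx i ord0) (delta_mx i ord0) = 1 :> R.
Proof. by have := qform_delta 1%:M i i; rewrite qform_scalar mul1r mxE eqxx. Qed.

Lemma sym_part_bounded A : (forall x, 0 <= qform x A x <= vdot x x) ->
  forall i j, -1 <= sym_part A i j <= 1.
Proof.
move=> A_bounded i j.
have := A_bounded (delta_mx i ord0 + delta_mx j ord0).
have := A_bounded (delta_mx i ord0 + (-1) *: delta_mx j ord0).
have := vdot_ge0 (delta_mx i ord0 + delta_mx j ord0).
have := vdot_ge0 (delta_mx i ord0 + (-1) *: delta_mx j ord0).
rewrite !(vdotDl, vdotDr, vdotZl, vdotZr, qformDl, qformDr, qformZl, qformZr).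
rewrite !qform_delta !vdot_delta mxE (vdotC (delta_mx j ord0)).
by move=> /= *; apply/andP; split; lra.
Qed.

Lemma sum_sqr_mean x :
  \sum_i \sum_j (x i ord0 ^+ 2 + x j ord0 ^+ 2) / 2 = M%:R * vdot x x.
Proof.
rewrite vdotE.
have rowE i : \sum_j (x i ord0 ^+ 2 + x j ord0 ^+ 2) / 2
    = x i ord0 ^+ 2 * M%:R / 2 + (\sum_j x j ord0 ^+ 2) / 2.
  by rewrite -mulr_suml big_split /= sumr_const card_ord mulr_natr; field.
rewrite (eq_bigr _ (fun i _ => rowE i)) big_split /= sumr_const card_ord -!mulr_suml.
under [in RHS]eq_bigr => i _ do rewrite -expr2.
by set S := \sum_(i < M) _; rewrite -[(S / 2) *+ M]mulr_natr; field.
Qed.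

Lemma dist_qform_le x A1 A2 h :
  (forall i j, `|sym_part A1 i j - sym_part A2 i j| <= h) ->
  `|qform x A1 x - qform x A2 x| <= h * (M%:R * vdot x x).
Proof.
move=> close; rewrite !qform_sym_part -sumrB -sum_sqr_mean mulr_sumr.
apply: le_trans (ler_norm_sum _ _ _) _; apply: ler_sum => i _.
rewrite -sumrB mulr_sumr; apply: le_trans (ler_norm_sum _ _ _) _.
apply: ler_sum => j _.
have -> : x i ord0 * sym_part A1 i j * x j ord0 - x i ord0 * sym_part A2 i j * x j ord0
    = (sym_part A1 i j - sym_part A2 i j) * (x i ord0 * x j ord0) by ring.
rewrite normrM; apply: ler_pM => //.
rewrite normrM -[x i ord0 ^+ 2]real_normK ?num_real // -[x j ord0 ^+ 2]real_normK ?num_real //.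
by have := sqr_ge0 (`|x i ord0| - `|x j ord0|); lra.
Qed.

End SymmetricPart.

Definition grid_index (R : realType) (h : R) (K : nat) (v : R) : 'I_K.+1 :=
  inord (Num.trunc ((v + 1) / h)).

Lemma grid_index_dist (R : realType) (h : R) K v w : 0 < h -> 2 / h <= K%:R ->
  -1 <= v <= 1 -> -1 <= w <= 1 -> grid_index h K v = grid_index h K w -> `|v - w| < h.
Proof.
move=> h_gt0 K_ge.
have cell u : -1 <= u <= 1 -> (Num.trunc ((u + 1) / h) < K.+1)%N /\
    (Num.trunc ((u + 1) / h))%:R <= (u + 1) / h < (Num.trunc ((u + 1) / h)).+1%:R.
  move=> /andP[u_ge u_le]; have u_ge0 : 0 <= (u + 1) / h by apply: divr_ge0; [lra | exact: ltW].
  split; last exact: truncn_itv.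
  rewrite ltnS truncn_le_nat; apply: (@le_lt_trans _ _ (2 / h)).
    by rewrite ler_pM2r ?invr_gt0 //; lra.
  by apply: le_lt_trans K_ge _; rewrite ltr_nat.
move=> /cell[vK /andP[v_ge v_lt]] /cell[wK /andP[w_ge w_lt]] /(congr1 val) /=.
rewrite !inordK // => vw; rewrite vw in v_ge v_lt.
have : `|(v + 1) / h - (w + 1) / h| < 1.
  by rewrite ltr_norml; rewrite -natr1 in v_lt w_lt; apply/andP; split; lra.
have -> : (v + 1) / h - (w + 1) / h = (v - w) / h by field; rewrite gt_eqF.
by rewrite normrM normfV (gtr0_norm h_gt0) ltr_pdivrMr // mul1r.
Qed.

Section GridCover.
Variables (R : realType) (d : nat) (D : set 'rV[R]_d) (k : 'rV[R]_d -> 'rV[R]_d -> R)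
  (sigma : nat -> R) (phi : nat -> 'rV[R]_d -> R).
Hypothesis sigma_ge0 : forall m, 0 <= sigma m.
Hypothesis mercer_cvg : forall z z', D z -> D z' ->
  (fun N => \sum_(m < N) sigma m * phi m z * phi m z') @ \oo --> k z z'.
Hypothesis k_diag_le1 : forall z, D z -> k z z <= 1.
Variables (lam eps : R) (M : nat).
Hypotheses (lam_gt0 : 0 < lam) (eps_gt0 : 0 < eps) (M_gt0 : (0 < M)%N).
Hypothesis remainder_le : forall z, D z -> mercer_remainder k sigma phi M z z <= eps ^+ 2 / 16.

(* With |x| <= 1, entries within h = eps^2 / (16 M) of each other change x^T A x by at
   most eps^2 / 16; K.+1 cells of width h cover [-1, 1]. *)
Let h := eps ^+ 2 / (16 * M%:R).
Let K := (Num.trunc (32 * M%:R / eps ^+ 2)).+1.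

Let posterior n (Z : 'I_n -> 'rV[R]_d) :=
  feature_posterior_mx (gram_mx k Z) (feature_mx sigma phi M Z) lam.

Let grid_label n (Z : 'I_n -> 'rV[R]_d) : 'M['I_K.+1]_M :=
  \matrix_(i, j) grid_index h K (sym_part (posterior Z) i j).

Lemma dist_sqrt_posterior_le n n' (Z : 'I_n -> 'rV[R]_d) (Z' : 'I_n' -> 'rV[R]_d)
    (x : 'cV[R]_M) :
  D !=set0 -> (forall i, D (Z i)) -> (forall i, D (Z' i)) -> grid_label Z = grid_label Z' ->
  vdot x x <= 1 ->
  `|Num.sqrt (qform x (posterior Z) x) - Num.sqrt (qform x (posterior Z') x)| <= eps / 4.
Proof.
move=> D_neq0 DZ DZ' same_label x_le1.
have h_gt0 : 0 < h by rewrite divr_gt0 ?exprn_gt0 ?mulr_gt0 ?ltr0n.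
have K_ge : 2 / h <= K%:R.
  have -> : 2 / h = 32 * M%:R / eps ^+ 2.
    by rewrite /h; field; rewrite gt_eqF // pnatr_eq0 -lt0n.
  exact/ltW/truncnS_gt.
have bounded := feature_posterior_gram_bounds sigma_ge0 mercer_cvg (M := M) DZ D_neq0 lam_gt0.
have bounded' := feature_posterior_gram_bounds sigma_ge0 mercer_cvg (M := M) DZ' D_neq0 lam_gt0.
have entries_close i j : `|sym_part (posterior Z) i j - sym_part (posterior Z') i j| <= h.
  apply/ltW/(grid_index_dist h_gt0 K_ge (sym_part_bounded bounded i j)
                                        (sym_part_bounded bounded' i j)).
  by have := congr1 (fun G : 'M['I_K.+1]_M => G i j) same_label; rewrite !mxE.
have /andP[q_ge0 _] := bounded x; have /andP[q'_ge0 _] := bounded' x.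
apply: le_trans (dist_sqrt_le q_ge0 q'_ge0) _.
rewrite -(sqrt_sqr_div16 (ltW eps_gt0)) ler_wsqrtr // (le_trans (dist_qform_le x entries_close)) //.
have -> : eps ^+ 2 / 16 = h * M%:R by rewrite /h; field; rewrite pnatr_eq0 -lt0n.
by apply: ler_wpM2l; [exact: ltW | exact: ler_piMr].
Qed.

Lemma kr_uncertainty_dist_le n n' (Z : 'I_n -> 'rV[R]_d) (Z' : 'I_n' -> 'rV[R]_d) z :
  (forall i, D (Z i)) -> (forall i, D (Z' i)) -> D z -> grid_label Z = grid_label Z' ->
  `|kr_uncertainty k lam Z z - kr_uncertainty k lam Z' z| <= eps.
Proof.
move=> DZ DZ' Dz same_label.
have rem_le : Num.sqrt (mercer_remainder k sigma phi M z z) <= eps / 4.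
  by rewrite -(sqrt_sqr_div16 (ltW eps_gt0)) ler_wsqrtr ?remainder_le.
have := le_trans (kr_uncertainty_feature_approx sigma_ge0 mercer_cvg M DZ Dz lam_gt0) rem_le.
have := le_trans (kr_uncertainty_feature_approx sigma_ge0 mercer_cvg M DZ' Dz lam_gt0) rem_le.
have := dist_sqrt_posterior_le (ex_intro _ z Dz) DZ DZ' same_label
  (le_trans (vdot_feature_vec_le sigma_ge0 mercer_cvg M Dz) (k_diag_le1 Dz)).
rewrite -/(posterior Z) -/(posterior Z').
set b := kr_uncertainty _ _ Z z; set b' := kr_uncertainty _ _ Z' z.
set s := Num.sqrt _; set s' := Num.sqrt _ => ss' b's' bs.
have -> : b - b' = (b - s) + (s - s') + (s' - b') by ring.
rewrite (le_trans (ler_normD _ _)) // (le_trans (lerD (ler_normD _ _) (lexx _))) //.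
by rewrite (distrC s'); have := eps_gt0; lra.
Qed.

Lemma covering_number_le_grid T :
  exists N, is_covering_number D (kr_uncertainty_class D k lam T) eps N
            /\ (N <= K.+1 ^ (M * M))%N.
Proof.
pose labelled f G := exists n (Z : 'I_n -> 'rV[R]_d),
  [/\ (n <= T)%N, injective Z, (forall i, D (Z i)), f = kr_uncertainty k lam Z
    & grid_label Z = G].
have [n n_le cov] : exists2 n, (n <= #|{: 'M['I_K.+1]_M}|)%N
    & has_cover D (kr_uncertainty_class D k lam T) eps n.
  apply: (has_cover_of_labelling (L := labelled)).
    by move=> f [n [Z [nT Zinj DZ ->]]]; exists (grid_label Z), n, Z.
  move=> f g G _ _ [n [Z [_ _ DZ -> <-]]] [n' [Z' [_ _ DZ' -> same_label]]] z Dz.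
  exact: kr_uncertainty_dist_le DZ DZ' Dz (esym same_label).
have [N [covN N_le]] := covering_number_le cov.
exists N; split => //; apply: leq_trans N_le (leq_trans n_le _).
by rewrite card_mx card_ord.
Qed.

End GridCover.

Lemma ln_grid_card_le (R : realType) (M : nat) (eps : R) : (0 < M)%N -> 0 < eps < 1 ->
  ln ((Num.trunc (32 * M%:R / eps ^+ 2)).+2%:R : R) <= ln 34 + ln M%:R + 2 * ln (1 / eps).
Proof.
move=> M_gt0 /andP[eps_gt0 eps_lt1].
have eps2_gt0 : 0 < eps ^+ 2 by rewrite exprn_gt0.
have inv_pos : 1 / eps \is Num.pos by rewrite posrE divr_gt0.
have bound_pos : 34 * M%:R / eps ^+ 2 \is Num.pos.
  by rewrite posrE divr_gt0 // mulr_gt0 // ltr0n.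
have -> : ln 34 + ln M%:R + 2 * ln (1 / eps) = ln (34 * M%:R / eps ^+ 2 : R).
  have -> : 34 * M%:R / eps ^+ 2 = 34 * M%:R * (1 / eps) ^+ 2 :> R by field; rewrite gt_eqF.
  have p34M : (34 * M%:R : R) \is Num.pos by rewrite posrE mulr_gt0 ?ltr0n.
  have inv2_pos : (1 / eps) ^+ 2 \is Num.pos by rewrite posrE exprn_gt0 // -posrE.
  rewrite [RHS]lnM // [ln (34 * _)]lnM ?posrE ?ltr0n // lnXn -?posrE //.
  by rewrite mulr_natl.
have card_pos : ((Num.trunc (32 * M%:R / eps ^+ 2)).+2%:R : R) \is Num.pos.
  by rewrite posrE ltr0n.
rewrite ler_ln //.
have -> : 34 * M%:R / eps ^+ 2 = 32 * M%:R / eps ^+ 2 + 2 * M%:R / eps ^+ 2.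
  by field; rewrite gt_eqF.
rewrite -addn2 natrD; apply: lerD.
  by rewrite truncn_le divr_ge0 ?mulr_ge0 ?ler0n // ltW.
have M_ge1 : 1 <= M%:R :> R by rewrite ler1n.
have eps2_le1 : eps ^+ 2 <= 1 by rewrite expr_le1 ?ltW.
by rewrite ler_pdivlMr // -subr_ge0 -mulrBr mulr_ge0 //; lra.
Qed.

Section TruncationLevel.
Variables (R : realType) (q ra c0 : R).
Hypotheses (q_gt1 : 1 < q) (ra_gt0 : 0 < ra) (c0_ge0 : 0 <= c0).

Let D0 := 16 * c0 / (q - 1) + 1.
Let c3 := (D0 / ra) `^ (q - 1)^-1 + 1.

(* Solves c0 M^(1 - q) / (q - 1) <= eps^2 / 16 for M, with D0 > 16 c0 / (q - 1). *)
Definition trunc_level (eps : R) : nat := (Num.trunc ((D0 / eps ^+ 2) `^ (q - 1)^-1)).+1.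

Let D0_gt0 : 0 < D0.
Proof. by rewrite /D0 ltr_wpDl // divr_ge0 ?mulr_ge0 // subr_ge0 ltW. Qed.

Lemma trunc_level_tail eps : 0 < eps ->
  c0 * ((trunc_level eps)%:R `^ (1 - q) / (q - 1)) <= eps ^+ 2 / 16.
Proof.
move=> eps_gt0; have q1_gt0 : 0 < q - 1 by rewrite subr_gt0.
have eps2_gt0 : 0 < eps ^+ 2 by rewrite exprn_gt0.
set M := trunc_level eps; set P := M%:R `^ (1 - q).
have PM : P * M%:R `^ (q - 1) = 1.
  rewrite -powRD; last by rewrite pnatr_eq0 implybT.
  have -> : 1 - q + (q - 1) = 0 by ring.
  by rewrite powRr0.
have level_ge : D0 / eps ^+ 2 <= M%:R `^ (q - 1).
  have Y_pow : ((D0 / eps ^+ 2) `^ (q - 1)^-1) `^ (q - 1) = D0 / eps ^+ 2.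
    by rewrite -powRrM mulVf ?gt_eqF // powRr1 // divr_ge0 ?ltW ?D0_gt0.
  rewrite -[X in X <= _]Y_pow; apply: ge0_ler_powR; rewrite ?nnegrE ?powR_ge0 ?ltW //.
  exact: truncnS_gt.
have PD0 : P * D0 <= eps ^+ 2.
  have := ler_wpM2l (powR_ge0 _ _ : 0 <= P) level_ge.
  by rewrite PM mulrA ler_pdivrMr // mul1r.
have -> : c0 * (P / (q - 1)) = (D0 - 1) * P / 16 by rewrite /D0; field; rewrite gt_eqF.
rewrite ler_pM2r // mulrC mulrBr mulr1; apply: le_trans PD0.
by rewrite gerBl powR_ge0.
Qed.

Lemma trunc_level_le eps : 0 < eps -> eps ^+ 2 <= ra ->
  (trunc_level eps)%:R <= c3 * (ra / eps ^+ 2) `^ (q - 1)^-1.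
Proof.
move=> eps_gt0 eps2_le; have eps2_gt0 : 0 < eps ^+ 2 by rewrite exprn_gt0.
set X := (ra / eps ^+ 2) `^ _.
have X_ge1 : 1 <= X.
  rewrite [X in X <= _](_ : 1 = 1 `^ (q - 1)^-1); last by rewrite powR1.
  apply: ge0_ler_powR; rewrite ?nnegrE.
  - by rewrite invr_ge0 subr_ge0 ltW.
  - by [].
  - by rewrite divr_ge0 // ltW.
  - by rewrite ler_pdivlMr // mul1r.
have Y_eq : (D0 / eps ^+ 2) `^ (q - 1)^-1 = (D0 / ra) `^ (q - 1)^-1 * X.
  rewrite -powRM ?divr_ge0 ?ltW ?D0_gt0 //; congr (_ `^ _).
  by field; rewrite !gt_eqF.
rewrite /trunc_level -natr1 Y_eq; apply: (@le_trans _ _ ((D0 / ra) `^ (q - 1)^-1 * X + 1)).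
  by rewrite lerD2r truncn_le -Y_eq powR_ge0.
by rewrite /c3 [(_ + 1) * X]mulrDl mul1r lerD2l.
Qed.

Lemma ln_trunc_level_le eps : 0 < eps -> eps ^+ 2 <= ra ->
  ln (trunc_level eps)%:R <= ln c3 + (q - 1)^-1 * (ln ra + 2 * ln (1 / eps)).
Proof.
move=> eps_gt0 eps2_le; have eps2_gt0 : 0 < eps ^+ 2 by rewrite exprn_gt0.
have c3_gt0 : 0 < c3 by rewrite /c3 ltr_pwDr ?powR_ge0.
have X_gt0 : 0 < (ra / eps ^+ 2) `^ (q - 1)^-1 by rewrite powR_gt0 ?divr_gt0.
apply: (@le_trans _ _ (ln (c3 * (ra / eps ^+ 2) `^ (q - 1)^-1))).
  by rewrite ler_ln ?posrE ?ltr0n ?mulr_gt0 // trunc_level_le.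
rewrite lnM ?posrE // ln_powR lerD2l ler_wpM2l ?invr_ge0 ?subr_ge0 ?(ltW q_gt1) //.
have -> : ra / eps ^+ 2 = ra * (1 / eps) ^+ 2 by field; rewrite gt_eqF.
by rewrite lnM ?posrE ?exprn_gt0 ?divr_gt0 // lnXn ?divr_gt0 // mulr_natl.
Qed.

Lemma covering_entropy_le : exists2 C : R, 0 < C & forall (eps : R) (N : nat),
  0 < eps < 1 -> eps ^+ 2 <= ra ->
  (N <= (Num.trunc (32 * (trunc_level eps)%:R / eps ^+ 2)).+2
        ^ (trunc_level eps * trunc_level eps))%N ->
  ln N%:R <= C * (ra / eps ^+ 2) `^ (2 / (q - 1)) * (1 + ln (1 / eps)).
Proof.
have q1_gt0 : 0 < q - 1 by rewrite subr_gt0.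
have c3_ge1 : 1 <= c3 by rewrite /c3 lerDr powR_ge0.
set c4 := ln 34 + `|ln c3| + `|ln ra| / (q - 1) + 2 + 2 / (q - 1).
have c4_ge : ln 34 + `|ln c3| + `|ln ra| / (q - 1) <= c4 /\ 2 + 2 / (q - 1) <= c4.
  have ln34_ge0 : 0 <= ln (34 : R) by rewrite ln_ge0 // ler1n.
  have : 0 <= `|ln ra| / (q - 1) by rewrite divr_ge0 ?normr_ge0 ?ltW.
  have : 0 <= 2 / (q - 1) by rewrite divr_ge0 ?ltW.
  by have := normr_ge0 (ln c3); rewrite /c4; lra.
have c4_gt0 : 0 < c4.
  have : 0 <= 2 / (q - 1) by rewrite divr_ge0 ?ltW.
  by case: c4_ge => _; lra.
exists (c3 ^+ 2 * c4); first by rewrite mulr_gt0 // exprn_gt0 // (lt_le_trans ltr01).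
move=> eps N /andP[eps_gt0 eps_lt1] eps2_le N_le.
set M := trunc_level eps; set X := (ra / eps ^+ 2) `^ (q - 1)^-1; set L := ln (1 / eps).
have L_ge0 : 0 <= L by rewrite ln_ge0 // ler_pdivlMr // mul1r ltW.
have X_ge0 : 0 <= X by exact: powR_ge0.
have -> : (ra / eps ^+ 2) `^ (2 / (q - 1)) = X ^+ 2.
  by rewrite /X -[RHS]powR_mulrn ?powR_ge0 // -powRrM [(_ - 1)^-1 * _]mulrC.
have M_gt0 : (0 < M)%N by [].
set Kt := (Num.trunc _).+2 in N_le.
have lnKt_le : ln (Kt%:R : R) <= c4 * (1 + L).
  have ln_card := ln_grid_card_le M_gt0 (introT andP (conj eps_gt0 eps_lt1)).
  have ln_M := ln_trunc_level_le eps_gt0 eps2_le.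
  rewrite -/Kt -/M -/L in ln_card ln_M.
  have abs_c3 := ler_norm (ln c3).
  have abs_ra : (q - 1)^-1 * ln ra <= `|ln ra| / (q - 1).
    by rewrite mulrC; apply: ler_wpM2r; [rewrite invr_ge0 ltW | exact: ler_norm].
  have L_coef : (2 + 2 / (q - 1)) * L <= c4 * L by apply: ler_wpM2r => //; case: c4_ge.
  by case: c4_ge => c4_ge1 _; lra.
have [->|N_gt0] := posnP N.
  rewrite ln0 // mulr_ge0 ?mulr_ge0 ?sqr_ge0 ?(ltW c4_gt0) //; lra.
have lnN_le : ln (N%:R : R) <= (M * M)%:R * ln (Kt%:R : R).
  rewrite mulr_natl -lnXn ?ltr0n // -natrX ler_ln ?posrE ?ltr0n ?expn_gt0 //.
  by rewrite ler_nat.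
have MM_le : (M * M)%:R <= c3 ^+ 2 * X ^+ 2.
  have M_le := trunc_level_le eps_gt0 eps2_le.
  by rewrite natrM -exprMn expr2; apply: ler_pM.
apply: (le_trans lnN_le).
rewrite (_ : _ * (1 + L) = (c3 ^+ 2 * X ^+ 2) * (c4 * (1 + L))); last by ring.
by apply: ler_pM; rewrite ?ler0n ?ln_ge0 ?ler1n.
Qed.

End TruncationLevel.

Lemma eigendecay_term_le (R : realType) d (c : nat -> R) rho
    (sigma : nat -> R) (phi : nat -> 'rV[R]_d -> R) (Cp alpha p eta : R) :
  0 < rho -> (forall m, 0 <= sigma m) -> poly_eigendecay c rho sigma phi Cp alpha p eta ->
  exists2 c0 : R, 0 <= c0 & forall m z, hcube d c rho z ->
    sigma m * phi m z ^+ 2 <= c0 * m.+1%:R `^ (- (p * (1 - 2 * eta))).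
Proof.
move=> rho_gt0 sigma_ge0 [Cp_gt0 [_ [_ [_ [sigma_le [B phi_le]]]]]].
have CpR_ge0 : 0 <= Cp * rho `^ alpha by rewrite mulr_ge0 ?powR_ge0 ?ltW.
exists (Cp * rho `^ alpha * B ^+ 2); first by rewrite mulr_ge0 ?sqr_ge0.
move=> m z Dz; have sigma_le' : sigma m <= Cp * rho `^ alpha * m.+1%:R `^ (- p).
  by rewrite mulrAC; exact: sigma_le.
have := mul_sqr_le_powR (ltr0Sn R m) (sigma_ge0 m) CpR_ge0 sigma_le' (phi_le m z Dz).
by rewrite (_ : p - 2 * (p * eta) = p * (1 - 2 * eta)) //; ring.
Qed.

Unset Implicit Arguments.

Theorem lemma7 (R : realType) (d : nat) (c : nat -> R) (rho : R)
    (k : 'rV[R]_d -> 'rV[R]_d -> R) (lambda : R)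
    (sigma : nat -> R) (phi : nat -> 'rV[R]_d -> R) (Cp alpha p eta : R) :
  (0 < d)%N -> 0 < rho ->
  pd_kernel (hcube d c rho) k ->
  {within [set zz | hcube d c rho zz.1 /\ hcube d c rho zz.2],
     continuous (fun zz : 'rV[R]_d * 'rV[R]_d => k zz.1 zz.2)} ->
  (forall z, hcube d c rho z -> k z z <= 1) ->
  mercer_eigenpairs c rho k sigma phi ->
  poly_eigendecay c rho sigma phi Cp alpha p eta ->
  1 < p * (1 - 2 * eta) ->
  0 < lambda ->
  exists C eps0 : R, 0 < C /\ 0 < eps0 /\
    forall (T : nat) (eps : R), 0 < eps < eps0 ->
      exists N : nat,
        is_covering_number (hcube d c rho) (kr_uncertainty_class (hcube d c rho) k lambda T) eps N /\
        ln (N%:R) <= C * ((rho `^ alpha / eps ^+ 2) `^ (2 / (p * (1 - 2 * eta) - 1)))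
                       * (1 + ln (1 / eps)).
Proof.
move=> _ rho_gt0 _ _ k_le1 mercer decay q_gt1 lam_gt0.
have [sigma_ge0 [_ [_ [_ [_ mercer_cvg]]]]] := mercer.
have [c0 c0_ge0 term_le] := eigendecay_term_le rho_gt0 sigma_ge0 decay.
set q := p * (1 - 2 * eta) in q_gt1 term_le *; set ra := rho `^ alpha.
have [C C_gt0 ln_N_le] := covering_entropy_le q_gt1 (powR_gt0 alpha rho_gt0) c0_ge0.
exists C, (Num.min (1 / 2) ra); do 2!split => //.
  by rewrite lt_min powR_gt0 ?andbT.
move=> T eps /andP[eps_gt0]; rewrite lt_min => /andP[eps_lt eps_lt_ra].
have eps2_le : eps ^+ 2 <= ra by rewrite expr2 (le_trans _ (ltW eps_lt_ra)) // ger_pMr //; lra.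
have rem_le z : hcube d c rho z ->
    mercer_remainder k sigma phi (trunc_level q c0 eps) z z <= eps ^+ 2 / 16.
  move=> Dz; apply: le_trans (trunc_level_tail q_gt1 c0_ge0 eps_gt0).
  exact: (mercer_remainder_diag_le (M := trunc_level q c0 eps) mercer_cvg q_gt1 c0_ge0 isT Dz
    (fun m => term_le m z Dz)).
have [N [covN N_le]] := covering_number_le_grid sigma_ge0 mercer_cvg k_le1 lam_gt0 eps_gt0
  (isT : (0 < trunc_level q c0 eps)%N) rem_le T.
by exists N; split => //; apply: ln_N_le N_le => //; apply/andP; split => //; lra.
Qed.
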